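(* Let $d\ge1$, let $\mu$ be a probability distribution supported in the unit hypercube $[0,1]^d$, let $\mu_n$ be an empirical distribution of $\mu$ on $n$ samples, let $\alpha\ge0$, and let $\mathcal{G}$ be a grid partitioning $[0,1]^d$ into axis-aligned cubic cells of side length $n^{-\alpha}$. Then with high probability $\mathrm{Exc}_\mu(\mathcal{G})=\tilde O\!\left(n^{\frac{d\alpha}{2}-\frac12}\right)$.
   Context: For a cell $\Box$ of $\mathcal{G}$, $\mu(\Box)$ and $\mu_n(\Box)$ denote the mass of $\mu$ and $\mu_n$ in $\Box$. The excess of a cell is $\mathrm{Exc}_\mu(\Box)=\max\{0,\mu(\Box)-\mu_n(\Box)\}$ and $\mathrm{Exc}_\mu(\mathcal{G})=\sum_{\Box\in\mathcal{G}}\mathrm{Exc}_\mu(\Box)$. An empirical distribution $\mu_n$ is $\frac1n\sum_{i=1}^n\delta_{x_i}$ with $x_i$ i.i.d. from $\mu$. $\tilde O(\cdot)$ hides polylogarithmic factors in $n$; ''with high probability'' means with probability at least $1-n^{-c}$ for some constant $c>0$. *)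

From HB Require Import structures.
From mathcomp Require Import all_boot all_order all_algebra.
From mathcomp Require Import all_classical all_reals all_analysis.
Set Implicit Arguments. Unset Strict Implicit. Unset Printing Implicit Defensive.
Import Order.TTheory GRing.Theory Num.Theory numFieldTopology.Exports numFieldNormedType.Exports.
Local Open Scope classical_set_scope.
Local Open Scope ring_scope.

Definition Rd (R : realType) (d : nat) :=
  g_sigma_algebraType (@open 'rV[R]_d).

Definition unit_cube (R : realType) (d : nat) : set (Rd R d) :=
  [set x | forall k : 'I_d, 0 <= x ord0 k <= 1].

Definition cell (R : realType) (d K : nat) (s : R) (j : {ffun 'I_d -> 'I_K})
  : set (Rd R d) :=
  [set x | forall k : 'I_d,
     (j k)%:R * s <= x ord0 k < (j k).+1%:R * s].

(* Number of cells per axis needed to cover [0,1] with side n^-alpha: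
   cells with indices 0 .. floor(n^alpha). *)
Definition ncells (R : realType) (n : nat) (alpha : R) : nat :=
  (`| Num.floor (powR n%:R alpha) |%N).+1.

Definition side (R : realType) (n : nat) (alpha : R) : R :=
  powR n%:R (- alpha).

Definition emp_mass (R : realType) (T : Type) (n : nat)
  (x : 'I_n -> T) (A : set T) : R :=
  (\sum_(i < n) (if `[< A (x i) >] then 1 else 0)) / n%:R.

Definition excess (R : realType) (d n : nat) (alpha : R)
  (mu : set (Rd R d) -> \bar R) (x : 'I_n -> Rd R d) : R :=
  \sum_(j : {ffun 'I_d -> 'I_(ncells n alpha)})
     Num.max 0 (fine (mu (cell (side n alpha) j))
                - emp_mass R x (cell (side n alpha) j)).

Definition mutually_independent (dO : measure_display) (Omega : measurableType dO)
  (R : realType) (P : probability Omega R) (dT : measure_display)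
  (T : measurableType dT) (n : nat) (X : 'I_n -> Omega -> T) : Prop :=
  forall A : 'I_n -> set T, (forall i, measurable (A i)) ->
    P (\bigcap_(i in [set: 'I_n]) (X i @^-1` A i)) =
    (\prod_(i < n) P (X i @^-1` A i))%E.

From HB Require Import structures.
From mathcomp Require Import all_boot all_order all_algebra.
From mathcomp Require Import all_classical all_reals all_analysis.
From mathcomp Require Import ring lra.
Import Order.TTheory GRing.Theory Num.Theory numFieldTopology.Exports numFieldNormedType.Exports.
Local Open Scope classical_set_scope.
Local Open Scope ring_scope.
Set Implicit Arguments. Unset Strict Implicit. Unset Printing Implicit Defensive.

(** The number of samples falling in a cell of mass p is binomial(n, p), so by
    a Chernoff bound its empirical mass is at least p - δ, with
    δ = sqrt (8 p L / n) and L = (dα + 2) ln n, except with probability n^-(dα+2).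
    A union bound over the at most 2^d n^(dα) cells leaves a failure
    probability of at most 1/n.  Outside the failure event the excess is at most
    Σ_j δ_j, and AM-GM, √x ≤ (x / t + t) / 2 with t = n^(-1/2 - dα/2), together
    with Σ_j p_j ≤ 1 bounds this sum by O(ln n · n^(dα/2 - 1/2)). *)

Lemma Rd_open_measurable (R : realType) (d : nat) (A : set (Rd R d)) :
  open (A : set 'rV[R]_d) -> measurable A.
Proof. exact: sub_sigma_algebra. Qed.

Lemma measurable_coord_lt (R : realType) (d : nat) (k : 'I_d) (b : R) :
  measurable [set x : Rd R d | x ord0 k < b].
Proof.
apply: Rd_open_measurable; apply: (open_comp (D := [set y | y < b])) => [x _|].
  exact: coord_continuous.
exact: open_lt.
Qed.

Lemma measurable_cell (R : realType) (d K : nat) (s : R) (j : {ffun 'I_d -> 'I_K}) :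
  measurable (cell s j).
Proof.
have -> : cell s j = \bigcap_(k in [set: 'I_d])
    (~` [set x : Rd R d | x ord0 k < (j k)%:R * s] `&`
        [set x | x ord0 k < (j k).+1%:R * s]).
  apply/seteqP; split => x /= cx k.
    by have /andP[lo hi] := cx k; split => //=; apply/negP; rewrite -leNgt.
  by have [lo hi] := cx k I; rewrite hi andbT leNgt; apply/negP.
apply: fin_bigcap_measurable; first exact: finite_finset.
by move=> k _; apply: measurableI; [apply: measurableC|]; exact: measurable_coord_lt.
Qed.

Lemma cells_trivIset (R : realType) (d K : nat) (s : R) :
  0 < s -> trivIset setT (@cell R d K s).
Proof.
move=> s0 j j' _ _ [x [/= cx cx']]; apply/ffunP => k.
have /andP[lo hi] := cx k; have /andP[lo' hi'] := cx' k.
have lt1 := le_lt_trans lo hi'; have lt2 := le_lt_trans lo' hi.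
rewrite ltr_pM2r // ltr_nat ltnS in lt1; rewrite ltr_pM2r // ltr_nat ltnS in lt2.
by apply/val_inj/eqP; rewrite eqn_leq lt1 lt2.
Qed.

Lemma card_cells_le (R : realType) (d n : nat) (alpha : R) :
  (1 <= n)%N -> 0 <= alpha ->
  (#|{ffun 'I_d -> 'I_(ncells n alpha)}|%:R : R) <= 2 ^+ d * n%:R `^ (d%:R * alpha).
Proof.
move=> n1 a0; rewrite card_ffun !card_ord natrX.
have pa1 : 1 <= n%:R `^ alpha :> R.
  by rewrite -[leLHS](powRr0 n%:R); apply: (ler_powR _ a0); rewrite ler1n.
have hK : (ncells n alpha)%:R <= 2 * n%:R `^ alpha :> R.
  rewrite /ncells -addn1 natrD natr_absz ger0_norm ?floor_ge0 ?powR_ge0 //.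
  by have := floor_le (n%:R `^ alpha); lra.
rewrite (mulrC d%:R) powRrM powR_mulrn ?powR_ge0 // -exprMn.
by apply: lerXn2r; rewrite ?nnegrE.
Qed.

Section finite_unions.
Context (d : measure_display) (T : measurableType d) (R : realType).
Context (mu : {measure set T -> \bar R}) (J : finType).

Lemma measure_bigcup_fin_le (Q : pred J) (F : J -> set T) :
  (forall j, measurable (F j)) ->
  (mu (\bigcup_(j in [set j | Q j]) F j) <= \sum_(j | Q j) mu (F j))%E.
Proof.
move=> mF; rewrite (@bigfs _ _ _ _ (index_enum J) Q) ?index_enum_uniq //; last first.
  by move=> j _; rewrite mem_index_enum.
apply: content_sub_fsum => //.
apply: fin_bigcup_measurable => [|j _]; last exact: mF.
exact: (@finite_finset J).
Qed.

Lemma measure_bigcup_fin (F : J -> set T) :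
  (forall j, measurable (F j)) -> trivIset setT F ->
  mu (\bigcup_j F j) = (\sum_j mu (F j))%E.
Proof.
move=> mF tF; rewrite measure_fin_bigcup //; last exact: (@finite_finset J).
have -> : [set: J] = [set` predT] by apply/seteqP; split.
rewrite -(@bigfs _ _ _ _ (index_enum J) predT) ?index_enum_uniq //.
by move=> j _; rewrite mem_index_enum.
Qed.

End finite_unions.

Lemma sum_cell_mass_le1 (R : realType) (d K : nat) (s : R)
    (mu : probability (Rd R d) R) : 0 < s ->
  \sum_(j : {ffun 'I_d -> 'I_K}) fine (mu (cell s j)) <= 1.
Proof.
move=> s0; rewrite -lee_fin -sumEFin.
rewrite (eq_bigr (fun j => mu (cell s j))) => [|j _]; last first.
  by rewrite fineK // fin_num_measure //; exact: measurable_cell.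
rewrite -measure_bigcup_fin ?probability_le1 //.
- apply: fin_bigcup_measurable => [|j _]; last exact: measurable_cell.
  exact: (@finite_finset {ffun _ -> _}).
- exact: measurable_cell.
- exact: cells_trivIset.
Qed.

Definition count_true (R : realType) (n : nat) (f : {ffun 'I_n -> bool}) : R :=
  \sum_(i < n) (if f i then 1 else 0).

Section count_patterns.
Context (T : Type) (R : realType) (n : nat) (E : 'I_n -> set T).

Definition count_in (w : T) : R := \sum_(i < n) (if `[< E i w >] then 1 else 0).

Definition pattern (f : {ffun 'I_n -> bool}) : set T :=
  \bigcap_(i in [set: 'I_n]) (if f i then E i else ~` E i).

Lemma count_in_le_bigcup (k : R) :
  [set w | count_in w <= k] =
  \bigcup_(f in [set f | count_true R f <= k]) pattern f.
Proof.
have count_pattern f w : pattern f w -> count_in w = count_true R f.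
  move=> Ffw; apply: eq_bigr => i _; have := Ffw i I.
  by case: (f i) => Ew; [rewrite asboolT | rewrite asboolF].
apply/seteqP; split => w /=.
- pose f := [ffun i => `[< E i w >]].
  have Ffw : pattern f w by move=> i _; rewrite ffunE; case: asboolP.
  by move=> kw; exists f => //=; rewrite -(count_pattern f w Ffw).
- by move=> [f /= fk /count_pattern ->].
Qed.

End count_patterns.

Lemma measurable_pattern (d : measure_display) (T : measurableType d) (n : nat)
    (E : 'I_n -> set T) (f : {ffun 'I_n -> bool}) :
  (forall i, measurable (E i)) -> measurable (pattern E f).
Proof.
move=> mE; apply: fin_bigcap_measurable => [|i _]; first exact: finite_finset.
by case: (f i); [|apply: measurableC]; exact: mE.
Qed.

Lemma expR_le_1B (R : realType) (u : R) :
  0 <= u <= 2^-1 -> expR (- (u + 2 * u ^+ 2)) <= 1 - u.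
Proof.
move=> /andP[u0 u1]; set v := u + 2 * u ^+ 2.
have prod_ge1 : 1 <= (1 - u) * expR v.
  apply: (@le_trans _ _ ((1 - u) * (1 + v))); first by rewrite /v; nra.
  by apply: ler_wpM2l; [lra | exact: expR_ge1Dx].
by rewrite expRN -div1r ler_pdivrMr ?expR_gt0.
Qed.

Section binomial_weight.
Context (R : realType) (n : nat) (p : R).

Definition binomial_weight (f : {ffun 'I_n -> bool}) : R :=
  \prod_(i < n) (if f i then p else 1 - p).

Lemma sum_expR_count_binomial_weight (v : R) :
  \sum_f expR (- (v * count_true R f)) * binomial_weight f =
  (expR (- v) * p + (1 - p)) ^+ n.
Proof.
transitivity (\prod_(i < n) \sum_(b : bool) (if b then expR (- v) * p else 1 - p)).
  rewrite bigA_distr_bigA; apply: eq_bigr => f _.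
  rewrite /count_true mulr_sumr -sumrN expR_sum -big_split /=.
  by apply: eq_bigr => i _; case: (f i); rewrite ?mulr1 ?mulr0 ?oppr0 ?expR0 ?mul1r.
by rewrite prodr_const card_ord big_bool.
Qed.

Hypotheses (p_ge0 : 0 <= p) (p_le1 : p <= 1).

Lemma binomial_weight_ge0 f : 0 <= binomial_weight f.
Proof. by apply: prodr_ge0 => i _; case: (f i); rewrite ?subr_ge0. Qed.

Lemma binomial_lower_tail_mgf (k u : R) : 0 <= u <= 2^-1 ->
  \sum_(f | count_true R f <= k) binomial_weight f <=
  expR ((u + 2 * u ^+ 2) * k - n%:R * p * u).
Proof.
move=> /andP[u0 u1]; set v := u + 2 * u ^+ 2.
have v0 : 0 <= v by rewrite /v; nra.
have markov : \sum_(f | count_true R f <= k) binomial_weight f <=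
    \sum_f expR (v * k) * (expR (- (v * count_true R f)) * binomial_weight f).
  rewrite [leRHS](bigID (fun f => count_true R f <= k)) /= -[leLHS]addr0.
  apply: lerD; last first.
    by apply: sumr_ge0 => f _; rewrite !mulr_ge0 ?expR_ge0 ?binomial_weight_ge0.
  apply: ler_sum => f fk; rewrite mulrA -expRD -[leLHS]mul1r.
  apply: ler_wpM2r; first exact: binomial_weight_ge0.
  by rewrite -expR0 ler_expR -mulrN -mulrDr mulr_ge0 // subr_ge0.
rewrite -mulr_sumr sum_expR_count_binomial_weight in markov.
apply: (le_trans markov).
have factor_le : expR (- v) * p + (1 - p) <= expR (- (u * p)).
  have ev : expR (- v) * p <= (1 - u) * p by apply: ler_wpM2r => //; apply: expR_le_1B; lra.
  have := expR_ge1Dx (- (u * p)); lra.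
have -> : v * k - n%:R * p * u = v * k + n%:R * (- (u * p)) by ring.
rewrite expRD expRM_natl ler_wpM2l ?expR_ge0 //.
apply: lerXn2r; rewrite ?nnegrE ?expR_ge0 //.
by rewrite addr_ge0 ?mulr_ge0 ?expR_ge0 ?subr_ge0.
Qed.

Lemma binomial_lower_tail (delta : R) : 0 < p -> 0 <= delta <= 2 * p ->
  \sum_(f | count_true R f <= n%:R * (p - delta)) binomial_weight f <=
  expR (- (n%:R * delta ^+ 2 / (8 * p))).
Proof.
move=> p_gt0 /andP[delta0 delta2p].
have u_bound : 0 <= delta / (4 * p) <= 2^-1.
  by rewrite divr_ge0 ?mulr_ge0 //= ?ler_pdivrMr; nra.
(* u = delta / (4 p) turns the exponent into -n delta^2 / (8 p) minus a nonnegative term. *)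
apply: (le_trans (binomial_lower_tail_mgf _ u_bound)); rewrite ler_expR.
have -> : (delta / (4 * p) + 2 * (delta / (4 * p)) ^+ 2) * (n%:R * (p - delta))
    - n%:R * p * (delta / (4 * p))
    = - (n%:R * delta ^+ 2 / (8 * p)) - n%:R * delta ^+ 3 / (8 * p ^+ 2).
  by field; rewrite gt_eqF.
by rewrite lerBlDr lerDl divr_ge0 ?mulr_ge0 ?exprn_ge0 // ?ler0n // ltW.
Qed.

End binomial_weight.

Lemma ln_ge1 (R : realType) (x : R) : 4 <= x -> 1 <= ln x.
Proof.
move=> x_ge4.
have sqrt_e_le2 : expR (2^-1 : R) <= 2.
  rewrite -[X in expR X]opprK expRN -[leRHS]invrK lef_pV2 ?posrE ?expR_gt0 //.
  by have := expR_ge1Dx (- 2^-1 : R); lra.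
have e_le4 : expR (1 : R) <= 4.
  have -> : (1 : R) = 2^-1 + 2^-1 by lra.
  by rewrite expRD; have := expR_ge0 (2^-1 : R); nra.
by rewrite -(expRK 1) ler_ln ?posrE ?expR_gt0 //; lra.
Qed.

Lemma sqrt_le_amgm (R : realType) (x t : R) :
  0 <= x -> 0 < t -> Num.sqrt x <= (x / t + t) / 2.
Proof.
move=> x0 t0; set y := Num.sqrt x.
have -> : x = y ^+ 2 by rewrite sqr_sqrtr.
have : 0 <= (y - t) ^+ 2 / t by rewrite divr_ge0 ?sqr_ge0 ?ltW.
have -> : (y - t) ^+ 2 / t = y ^+ 2 / t + t - 2 * y by field; rewrite gt_eqF.
lra.
Qed.

Lemma sum_sqrt_le (R : realType) (J : finType) (a t : R) (q : J -> R) :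
  0 <= a -> 0 < t -> (forall j, 0 <= q j) ->
  \sum_j Num.sqrt (a * q j) <= (a / t * \sum_j q j + #|J|%:R * t) / 2.
Proof.
move=> a0 t0 q0.
apply: le_trans (ler_sum _ (fun j _ => sqrt_le_amgm (mulr_ge0 a0 (q0 j)) t0)) _.
rewrite -mulr_suml big_split /= sumr_const mulr_natl mulr_sumr.
by under eq_bigr do rewrite mulrAC.
Qed.

Lemma powR_half_sqr (R : realType) (x a : R) :
  0 < x -> x * (x `^ (a / 2 - 2^-1)) ^+ 2 = x `^ a.
Proof.
move=> x0; have x_neq0 : x != 0 by rewrite gt_eqF.
rewrite expr2 -powRD ?x_neq0 ?implybT // -[X in X * _](powRr1 (ltW x0)).
by rewrite -powRD ?x_neq0 ?implybT //; congr powR; field.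
Qed.

Section empirical_lower_tail.
Context (dO : measure_display) (Omega : measurableType dO) (R : realType).
Context (P : probability Omega R) (dT : measure_display) (T : measurableType dT).
Context (mu : probability T R) (n : nat) (X : 'I_n -> Omega -> T).
Hypothesis X_measurable : forall i, measurable_fun setT (X i).
Hypothesis X_law : forall i B, measurable B -> P (X i @^-1` B) = mu B.
Hypothesis X_indep : mutually_independent P X.
Variable B : set T.
Hypothesis mB : measurable B.

Lemma fine_probability_le1 : fine (mu B) <= 1.
Proof. by rewrite -lee_fin fineK ?fin_num_measure ?probability_le1. Qed.

Lemma measurable_hits i : measurable (X i @^-1` B).
Proof. by rewrite -[_ @^-1` _]setTI; exact: X_measurable. Qed.

Lemma pattern_hits_prob f :
  P (pattern (fun i => X i @^-1` B) f) = (binomial_weight (fine (mu B)) f)%:E.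
Proof.
have mBf i : measurable (if f i then B else ~` B).
  by case: (f i) => //; exact: measurableC.
have -> : pattern (fun i => X i @^-1` B) f =
    \bigcap_(i in [set: 'I_n]) X i @^-1` (if f i then B else ~` B).
  by apply: eq_bigcapr => i _; case: (f i).
rewrite X_indep // -prodEFin; apply: eq_bigr => i _; rewrite X_law //.
case: (f i); first by rewrite fineK // fin_num_measure.
by rewrite probability_setC // EFinB fineK // fin_num_measure.
Qed.

Lemma emp_mass_le_bigcup (c : R) : (0 < n)%N ->
  [set w | emp_mass R (fun i => X i w) B <= c] =
  \bigcup_(f in [set f | count_true R f <= n%:R * c]) pattern (fun i => X i @^-1` B) f.
Proof.
move=> n_gt0; rewrite -count_in_le_bigcup.
by apply/seteqP; split => w; rewrite /= /emp_mass ler_pdivrMr ?ltr0n // mulrC.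
Qed.

Lemma measurable_emp_mass_le (c : R) : (0 < n)%N ->
  measurable [set w | emp_mass R (fun i => X i w) B <= c].
Proof.
move=> n_gt0; rewrite emp_mass_le_bigcup //.
apply: fin_bigcup_measurable => [|f _]; first exact: finite_finset.
exact: (measurable_pattern _ measurable_hits).
Qed.

Lemma emp_mass_lower_tail (delta : R) :
  (0 < n)%N -> 0 < fine (mu B) -> 0 <= delta <= 2 * fine (mu B) ->
  (P [set w | (emp_mass R (fun i => X i w) B <= fine (mu B) - delta)%R] <=
   (expR (- (n%:R * delta ^+ 2 / (8 * fine (mu B)))))%:E)%E.
Proof.
move=> n_gt0 p_gt0 delta_bound.
rewrite emp_mass_le_bigcup //.
apply: (le_trans (measure_bigcup_fin_le _ _ _)) => [f|].
  exact: (measurable_pattern _ measurable_hits).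
rewrite (eq_bigr (fun f => (binomial_weight (fine (mu B)) f)%:E)) => [|f _].
  rewrite sumEFin lee_fin binomial_lower_tail //.
  - exact: fine_ge0 (measure_ge0 _ _).
  - exact: fine_probability_le1.
exact: pattern_hits_prob.
Qed.

End empirical_lower_tail.

Lemma measurable_excess_le (R : realType) (d n : nat) (alpha : R)
    (mu : set (Rd R d) -> \bar R) (dO : measure_display) (Omega : measurableType dO)
    (X : 'I_n -> Omega -> Rd R d) (b : R) :
  (forall i, measurable_fun setT (X i)) ->
  measurable [set w | excess alpha mu (fun i => X i w) <= b].
Proof.
move=> mX.
have m_excess : measurable_fun setT (fun w => excess alpha mu (fun i => X i w)).
  apply: measurable_sum => j.
  apply: (measurable_realfun.measurable_maxr (f := fun=> 0)); first exact: measurable_cst.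
  apply: measurable_realfun.measurable_funB; first exact: measurable_cst.
  apply: (measurable_realfun.measurable_funM (g := fun=> n%:R^-1)); last first.
    exact: measurable_cst.
  apply: measurable_sum => i.
  have -> : (fun w => if `[< cell (side n alpha) j (X i w) >] then 1 else 0 : R) =
      \1_(X i @^-1` cell (side n alpha) j).
    apply/funext => w; rewrite /indic.
    by case: asboolP => h; [rewrite mem_set | rewrite memNset].
  apply: measurable_realfun.measurable_indic.
  by rewrite -[_ @^-1` _]setTI; apply: mX => //; exact: measurable_cell.
have := m_excess measurableT _ (@measurable_itv _ `]-oo, b]).
by rewrite setTI; congr measurable; apply/seteqP; split => w; rewrite /= in_itv.
Qed.

Section grid_concentration.
Context (R : realType) (d : nat) (alpha : R) (n : nat).
Context (dO : measure_display) (Omega : measurableType dO) (P : probability Omega R).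
Context (mu : probability (Rd R d) R) (X : 'I_n -> Omega -> Rd R d).
Hypothesis alpha_ge0 : 0 <= alpha.
Hypothesis n_ge4 : (4 <= n)%N.
Hypothesis n_ge_2d : (2 ^ d <= n)%N.
Hypothesis X_measurable : forall i, measurable_fun setT (X i).
Hypothesis X_law : forall i B, measurable B -> P (X i @^-1` B) = mu B.
Hypothesis X_indep : mutually_independent P X.

Let J := {ffun 'I_d -> 'I_(ncells n alpha)}.
Let s := side n alpha.
Let A := d%:R * alpha + 2.
Let L := A * ln n%:R.
Let B := n%:R `^ (d%:R * alpha / 2 - 2^-1).
Let mass (j : J) := fine (mu (cell s j)).
Let rate := 8 * L / n%:R.
Let dev (j : J) := Num.sqrt (rate * mass j).
Let low (j : J) :=
  [set w | emp_mass R (fun i => X i w) (cell s j) <= mass j - dev j].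

Let n_gt0 : 0 < n%:R :> R.
Proof. by rewrite ltr0n (leq_trans _ n_ge4). Qed.

Let ln_n_ge1 : 1 <= ln n%:R :> R.
Proof. by apply: ln_ge1; rewrite ler_nat. Qed.

Let L_ge0 : 0 <= L.
Proof.
rewrite mulr_ge0 //; first by rewrite addr_ge0 ?mulr_ge0.
by apply: le_trans ln_n_ge1.
Qed.

Let rate_ge0 : 0 <= rate.
Proof. by apply: divr_ge0 (mulr_ge0 _ L_ge0) _; rewrite ?ler0n. Qed.

Let mass_ge0 j : 0 <= mass j.
Proof. exact: fine_ge0 (measure_ge0 _ _). Qed.

Lemma prob_low_le j : dev j < mass j -> (P (low j) <= (n%:R `^ (- A))%:E)%E.
Proof.
move=> dev_lt; have mass_gt0 : 0 < mass j by exact: le_lt_trans (sqrtr_ge0 _) dev_lt.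
have dev_bound : 0 <= dev j <= 2 * mass j.
  by apply/andP; split; [exact: sqrtr_ge0 | lra].
apply: le_trans (emp_mass_lower_tail X_measurable X_law X_indep
  (measurable_cell s j) _ mass_gt0 dev_bound) _; first exact: leq_trans n_ge4.
have dev_sq : dev j ^+ 2 = rate * mass j.
  exact: sqr_sqrtr (mulr_ge0 rate_ge0 (mass_ge0 j)).
rewrite lee_fin /powR gt_eqF // -/(mass j) dev_sq.
have -> : n%:R * (rate * mass j) / (8 * mass j) = L.
  by rewrite /rate; field; rewrite !gt_eqF.
by rewrite mulNr.
Qed.

Lemma card_cells_powR_le : n%:R `^ (- A) *+ #|J| <= n%:R `^ (-1).
Proof.
have n_neq0 : n%:R != 0 :> R by rewrite gt_eqF.
have cardJ := card_cells_le d (leq_trans (isT : (1 <= 4)%N) n_ge4) alpha_ge0.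
rewrite -mulr_natl powR_inv1 ?ler0n //.
apply: (le_trans (ler_wpM2r (powR_ge0 _ _) cardJ)).
rewrite -mulrA -powRD ?n_neq0 ?implybT //.
have -> : d%:R * alpha + - A = - 2%:R by rewrite /A; lra.
rewrite powRN powR_mulrn ?ler0n // expr2 invfM mulrA -[leRHS]mul1r.
by rewrite ler_wpM2r ?invr_ge0 ?ler0n // ler_pdivrMr // mul1r -natrX ler_nat.
Qed.

Lemma measurable_low j : measurable (low j).
Proof.
apply: measurable_emp_mass_le => //; first exact: measurable_cell.
exact: leq_trans n_ge4.
Qed.

Lemma prob_some_low_le :
  (P (\bigcup_(j in [set j | (dev j < mass j)%R]) low j) <= (n%:R `^ (-1))%:E)%E.
Proof.
apply: le_trans (measure_bigcup_fin_le _ _ measurable_low) _.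
apply: (@le_trans _ _ (\sum_(j : J) (n%:R `^ (- A))%:E)).
  rewrite big_mkcond /=; apply: lee_sum => j _.
  by case: ifP => [/prob_low_le //|_]; rewrite lee_fin powR_ge0.
by rewrite sumEFin lee_fin sumr_const card_cells_powR_le.
Qed.

Lemma excess_le_sum_dev w :
  ~ (\bigcup_(j in [set j | (dev j < mass j)%R]) low j) w ->
  excess alpha mu (fun i => X i w) <= \sum_j dev j.
Proof.
move=> not_low; apply: ler_sum => j _; rewrite ge_max sqrtr_ge0 /=.
change (mass j - emp_mass R (fun i => X i w) (cell s j) <= dev j).
have emp_ge0 : 0 <= emp_mass R (fun i => X i w) (cell s j).
  by rewrite divr_ge0 ?ler0n // sumr_ge0 // => i _; case: ifP.
have [dev_lt|] := ltP (dev j) (mass j); last lra.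
have /negP : ~ low j w by move=> low_w; apply: not_low; exists j.
by rewrite /low /= -ltNge; lra.
Qed.

Lemma sum_dev_le : \sum_j dev j <= (4 * A + 2 ^+ d) * ln n%:R * B.
Proof.
have B_gt0 : 0 < B by rewrite powR_gt0.
have t_gt0 : 0 < (n%:R * B)^-1 by rewrite invr_gt0 mulr_gt0.
apply: le_trans (sum_sqrt_le rate_ge0 t_gt0 mass_ge0) _.
have rate_t : rate / (n%:R * B)^-1 = 8 * L * B.
  by rewrite invrK /rate; field; rewrite gt_eqF.
have mass_sum : \sum_j mass j <= 1.
  by apply: sum_cell_mass_le1; rewrite powR_gt0.
have cardJ : #|J|%:R * (n%:R * B)^-1 <= 2 ^+ d * B.
  rewrite ler_pdivrMr ?mulr_gt0 //.
  have -> : 2 ^+ d * B * (n%:R * B) = 2 ^+ d * (n%:R * B ^+ 2) by ring.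
  rewrite powR_half_sqr //; apply: card_cells_le alpha_ge0.
  exact: leq_trans n_ge4.
have L_mass : 8 * L * B * \sum_j mass j <= 8 * L * B.
  by rewrite ler_piMr // mulr_ge0 ?(ltW B_gt0) // mulr_ge0.
have B_ln : 2 ^+ d * B <= 2 ^+ d * B * ln n%:R.
  by rewrite ler_peMr ?mulr_ge0 ?exprn_ge0 ?(ltW B_gt0).
rewrite rate_t; apply: (@le_trans _ _ ((8 * L * B + 2 ^+ d * B) / 2)).
  by rewrite ler_wpM2r ?invr_ge0 ?ler0n // lerD.
have : 0 <= 2 ^+ d * B by rewrite mulr_ge0 ?exprn_ge0 ?(ltW B_gt0).
by move: B_ln; rewrite /L; lra.
Qed.

Lemma excess_concentration :
  (P [set w | (excess alpha mu (fun i => X i w) <= (4 * A + 2 ^+ d) * ln n%:R * B)%R]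
   >= (1 - n%:R `^ (-1))%:E)%E.
Proof.
set good := [set w | _].
have good_measurable : measurable good by exact: measurable_excess_le.
have not_good_sub : ~` good `<=` \bigcup_(j in [set j | (dev j < mass j)%R]) low j.
  move=> w not_good; apply: contrapT => not_low; apply: not_good.
  exact: le_trans (excess_le_sum_dev not_low) sum_dev_le.
have not_good_le : (P (~` good) <= (n%:R `^ (-1))%:E)%E.
  apply: le_trans prob_some_low_le; apply: le_measure not_good_sub; rewrite inE.
    exact: measurableC.
  apply: fin_bigcup_measurable => [|j _]; [exact: (@finite_finset J) | exact: measurable_low].
rewrite -[good]setCK probability_setC; last exact: measurableC.
have fin_not_good : P (~` good) \is a fin_num.
  by rewrite fin_num_measure //; exact: measurableC.
rewrite -(fineK fin_not_good) lee_fin in not_good_le *.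
by rewrite -EFinB lee_fin lerB.
Qed.

End grid_concentration.

Theorem lemmaA2 (R : realType) (d : nat) (alpha : R) :
  (1 <= d)%N -> 0 <= alpha ->
  exists (c C : R) (p N0 : nat), 0 < c /\
  forall n : nat, (N0 <= n)%N ->
  forall (dO : measure_display) (Omega : measurableType dO)
         (P : probability Omega R) (mu : probability (Rd R d) R)
         (X : 'I_n -> Omega -> Rd R d),
    mu (~` @unit_cube R d) = 0%E ->
    (forall i, measurable_fun setT (X i)) ->
    (forall i (B : set (Rd R d)), measurable B -> P (X i @^-1` B) = mu B) ->
    mutually_independent P X ->
    (P [set w | (excess alpha mu (fun i => X i w)
                <= C * (ln n%:R) ^+ p * powR n%:R (d%:R * alpha / 2 - 2^-1))%R]
      >= (1 - powR n%:R (- c))%:E)%E.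
Proof.
(* Neither [1 <= d] nor the support of [mu] matters: the argument only uses that
   the grid cells are disjoint, so that their masses sum to at most 1. *)
move=> _ alpha_ge0.
exists 1, (4 * (d%:R * alpha + 2) + 2 ^+ d), 1%N, (2 ^ d + 4)%N; split => //.
move=> n n_large dO Omega P mu X _ X_measurable X_law X_indep.
apply: excess_concentration => //.
- exact: leq_trans (leq_addl _ _) n_large.
- exact: leq_trans (leq_addr _ _) n_large.
Qed.
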